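(* Let $n\ge1$, let $(p_j,u_j)$, $0\le j\le n$, be the coordinates of the trajectory $T_n$, and put $\|j\|=\min(j,n-j)$. Then for $0\le j\le n$, $$|p_j-1|\le 2^{-\|j\|}\qquad\text{and}\qquad 0<1-p_ju_j\le \phi\,2^{-\|j\|},$$ where $\phi=(1+\sqrt5)/2$.
   Context: $\Phi$ is the partial map of $\mathbb{R}^2$ defined for $p\ne0$ by $\Phi(p,u)=\bigl(p^2(u+1)-1,\ 1/p\bigr)$. For $n\ge1$, the trajectory $T_n$ is the (existing and unique) finite sequence $(p_j,u_j)$, $j=0,\dots,n$, with $(p_j,u_j)=\Phi(p_{j-1},u_{j-1})$ for $1\le j\le n$, $u_0=0$, $p_n=0$, and $p_j>0$ for $0\le j\le n-1$. *)

From Stdlib Require Export Reals.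
Open Scope R_scope.

(* The partial map Phi(p,u) = (p^2 (u+1) - 1, 1/p), meaningful for p <> 0. *)
Definition Phi (x : R * R) : R * R :=
  let (p, u) := x in (p ^ 2 * (u + 1) - 1, / p).

Definition is_trajectory (n : nat) (p u : nat -> R) : Prop :=
  (forall j : nat, (1 <= j <= n)%nat -> (p j, u j) = Phi (p (j - 1)%nat, u (j - 1)%nat))
  /\ u 0%nat = 0
  /\ p n = 0
  /\ (forall j : nat, (j <= n - 1)%nat -> 0 < p j).

Definition golden : R := (1 + sqrt 5) / 2.

Definition dist_end (n j : nat) : nat := Nat.min j (n - j).

From Stdlib Require Import Reals Lra Lia Psatz.
Open Scope R_scope.

(* In the coordinates p and d = 1 - p u, one step of Phi reads
   d' = d - p + 1/p and p' = p (1 - d') = p - p d + p^2 - 1.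
   Three facts drive the proof.  First, d_j <= 1 and p_j is strictly increasing
   in p_0 for fixed j, so the endpoint condition p_n = 0 determines the
   trajectory; as (1/p_{n-1-j}, d_{n-j}) is again a trajectory, this gives the
   symmetries p_j p_{n-1-j} = 1 and d_j = d_{n-j}, and hence p_j >= 1 on the
   first half.  Second, the region {p >= 1, d (5 + 5p) <= 26 (p - 1)} is
   forward invariant and never reaches p = 0, so the trajectory stays outside
   it; at j = 0 this gives p_0 < 31/21.  Third, outside that region and for
   1 <= p < 31/21, one step at least halves 1 - 1/p.  The bounds on the second
   half follow from those on the first by the symmetries. *)

Record pd_trajectory (n : nat) (p d : nat -> R) : Prop := {
  pdt_d0 : d 0%nat = 1;
  pdt_pn : p n = 0;
  pdt_pos : forall j, (j < n)%nat -> 0 < p j;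
  pdt_d_succ : forall j, (j < n)%nat -> d (S j) = d j - p j + / p j;
  pdt_p_succ : forall j, (j < n)%nat -> p (S j) = p j * (1 - d (S j)) }.

Lemma nat_invariant_up (Q : nat -> Prop) k n :
  (k <= n)%nat -> Q k -> (forall j, (k <= j < n)%nat -> Q j -> Q (S j)) -> Q n.
Proof.
  intros Hkn Hk Hstep.
  assert (H : forall m, (k + m <= n)%nat -> Q (k + m)%nat).
  { induction m as [|m IH]; intros Hm.
    - now rewrite Nat.add_0_r.
    - rewrite Nat.add_succ_r. apply Hstep; [lia|]. apply IH. lia. }
  replace n with (k + (n - k))%nat by lia. apply H. lia.
Qed.

Lemma nat_invariant_down (Q : nat -> Prop) k :
  Q k -> (forall j, (j < k)%nat -> Q (S j) -> Q j) -> Q 0%nat.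
Proof.
  induction k as [|k IH]; intros Hk Hstep; [exact Hk|].
  apply IH.
  - apply Hstep; [lia | exact Hk].
  - intros j Hj. apply Hstep. lia.
Qed.

Lemma Rinv_le_1 x : 1 <= x -> / x <= 1.
Proof. intros. rewrite <- Rinv_1. apply Rinv_le_contravar; lra. Qed.

Lemma Rinv_gt_1 x : 0 < x -> x < 1 -> 1 < / x.
Proof. intros. rewrite <- Rinv_1. apply Rinv_lt_contravar; lra. Qed.

Lemma golden_ge_4_3 : 4 / 3 <= golden.
Proof.
  unfold golden. assert (5 / 3 <= sqrt 5).
  { rewrite <- (sqrt_square (5 / 3)) by lra. apply sqrt_le_1_alt. lra. }
  lra.
Qed.

Lemma step_p_lt p d P D :
  0 < p -> p < P -> D <= d -> d <= 1 ->
  p - p * d + p * p - 1 < P - P * D + P * P - 1.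
Proof.
  intros Hp HpP HDd Hd.
  assert (P * D <= P * d) by nra.
  assert (0 <= (P - p) * (1 - d)) by nra.
  assert (0 < (P - p) * (P + p)) by nra.
  nra.
Qed.

Lemma barrier_step p d p' d' :
  1 <= p -> d * (5 + 5 * p) <= 26 * (p - 1) ->
  d' = d - p + / p -> p' = p * (1 - d') ->
  1 <= p' /\ d' * (5 + 5 * p') <= 26 * (p' - 1).
Proof.
  intros Hp Hd Ed' Ep'.
  assert (Ep'_poly : p' = p - p * d + p * p - 1) by (subst; field; lra).
  assert (Hpd' : p * d' = p - p') by (subst; ring).
  clear Ed' Ep'.
  set (e := p - 1). set (t := 26 * e - d * (5 + 5 * p)).
  assert (He : 0 <= e) by (unfold e; lra).
  assert (Ht : 0 <= t * p) by (unfold t, e; nra).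
  assert (Hp'1 : 5 * (1 + p) * (p' - 1) = e * (4 - e + 5 * e ^ 2) + t * p)
    by (rewrite Ep'_poly; unfold t, e; ring).
  assert (Hp'ge1 : 1 <= p').
  { assert (0 <= e * (4 - e + 5 * e ^ 2)).
    { apply Rmult_le_pos; [lra|]. pose proof (pow2_ge_0 (e - 1 / 10)). nra. }
    nra. }
  split; [exact Hp'ge1|].
  (* A certificate: in e = p - 1 >= 0 and t >= 0, every coefficient is nonnegative. *)
  assert (Hcert : (5 * (1 + p)) ^ 2 * (26 * p * (p' - 1) - (p - p') * (5 + 5 * p')) =
    e * (440 + 280 * e + 1540 * e ^ 2 + 2050 * e ^ 3 + 475 * e ^ 4 + 125 * e ^ 5)
    + t * p * (360 + 430 * e + 95 * e ^ 2 + 50 * e ^ 3) + 5 * (t * p) ^ 2)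
    by (rewrite Ep'_poly; unfold t, e; ring).
  assert (Hcert_nonneg :
    0 <= (5 * (1 + p)) ^ 2 * (26 * p * (p' - 1) - (p - p') * (5 + 5 * p'))).
  { assert (Hpow : forall k, 0 <= e ^ k) by (intro; apply pow_le; exact He).
    assert (0 <= 440 + 280 * e + 1540 * e ^ 2 + 2050 * e ^ 3 + 475 * e ^ 4 + 125 * e ^ 5)
      by (pose proof (Hpow 2%nat); pose proof (Hpow 3%nat);
          pose proof (Hpow 4%nat); pose proof (Hpow 5%nat); lra).
    assert (0 <= 360 + 430 * e + 95 * e ^ 2 + 50 * e ^ 3)
      by (pose proof (Hpow 2%nat); pose proof (Hpow 3%nat); lra).
    pose proof (pow2_ge_0 (t * p)).
    rewrite Hcert. nra. }
  assert ((p - p') * (5 + 5 * p') <= 26 * p * (p' - 1)).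
  { assert (0 < (5 * (1 + p)) ^ 2) by (apply pow_lt; lra). nra. }
  nra.
Qed.

Lemma contraction p d p' :
  1 <= p -> p < 31 / 21 -> 26 * (p - 1) < d * (5 + 5 * p) ->
  p' = p - p * d + p * p - 1 -> 0 < p' ->
  1 - / p' <= (1 - / p) / 2.
Proof.
  intros Hp Hp31 Hd Ep' Hp'.
  (* With e = p - 1, the first summand is nonpositive as 5 e^2 - e - 1 < 0 for 0 <= e < 10/21. *)
  assert (Hkey : (p' - 1) * (1 + p) <= p - 1).
  { assert (E : 5 * ((p' - 1) * (1 + p) - (p - 1)) =
      (p - 1) * (5 * (p - 1) ^ 2 - (p - 1) - 1) - (d * (5 + 5 * p) - 26 * (p - 1)) * p)
      by (subst; ring).
    assert (0 <= (p - 1) * - (5 * (p - 1) ^ 2 - (p - 1) - 1))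
      by (apply Rmult_le_pos; nra).
    assert (0 <= (d * (5 + 5 * p) - 26 * (p - 1)) * p) by nra.
    lra. }
  assert (E : (1 - / p) / 2 - (1 - / p') = ((p - 1) - (p' - 1) * (1 + p)) / (2 * p * p'))
    by (field; lra).
  assert (0 <= ((p - 1) - (p' - 1) * (1 + p)) / (2 * p * p'))
    by (apply Rmult_le_pos; [nra | left; apply Rinv_0_lt_compat; nra]).
  lra.
Qed.

Section Trajectory.

Variables (n : nat) (p d : nat -> R).
Hypothesis T : pd_trajectory n p d.

Lemma pdt_p_succ_expand j : (j < n)%nat -> p (S j) = p j - p j * d j + p j * p j - 1.
Proof.
  intros Hj. rewrite (pdt_p_succ _ _ _ T j Hj), (pdt_d_succ _ _ _ T j Hj).
  pose proof (pdt_pos _ _ _ T j Hj). field. lra.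
Qed.

Lemma pdt_p_nonneg j : (j <= n)%nat -> 0 <= p j.
Proof.
  intros Hj. destruct (Nat.eq_dec j n) as [->|Hjn].
  - rewrite (pdt_pn _ _ _ T). lra.
  - left. apply (pdt_pos _ _ _ T). lia.
Qed.

Lemma pdt_d_le_1 j : (j <= n)%nat -> d j <= 1.
Proof.
  intros Hj. destruct j as [|j].
  - rewrite (pdt_d0 _ _ _ T). lra.
  - pose proof (pdt_p_succ _ _ _ T j ltac:(lia)).
    pose proof (pdt_p_nonneg (S j) Hj). pose proof (pdt_pos _ _ _ T j ltac:(lia)).
    nra.
Qed.

Lemma pdt_d_n : (1 <= n)%nat -> d n = 1.
Proof.
  intros Hn. destruct n as [|m]; [lia|].
  pose proof (pdt_p_succ _ _ _ T m ltac:(lia)) as Hstep.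
  rewrite (pdt_pn _ _ _ T) in Hstep.
  pose proof (pdt_pos _ _ _ T m ltac:(lia)).
  symmetry in Hstep. apply Rmult_integral in Hstep. lra.
Qed.

Lemma pdt_d_pos j : (j <= n)%nat -> 0 < d j.
Proof.
  intros Hj. apply Rnot_le_lt. intros Hdj.
  destruct (Rle_or_lt 1 (p j)) as [Hp|Hp].
  - assert (Hinv : 1 <= p n /\ d n <= 0).
    { apply (nat_invariant_up (fun i => 1 <= p i /\ d i <= 0) j); auto.
      intros i Hi [Hpi Hdi].
      pose proof (pdt_p_succ_expand i ltac:(lia)).
      pose proof (pdt_d_succ _ _ _ T i ltac:(lia)).
      pose proof (Rinv_le_1 _ Hpi).
      split; nra. }
    rewrite (pdt_pn _ _ _ T) in Hinv. lra.
  - assert (Hinv : p 0%nat < 1 /\ d 0%nat <= 0).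
    { apply (nat_invariant_down (fun i => p i < 1 /\ d i <= 0) j); auto.
      intros i Hi [Hpi Hdi].
      pose proof (pdt_p_succ _ _ _ T i ltac:(lia)).
      pose proof (pdt_d_succ _ _ _ T i ltac:(lia)).
      pose proof (pdt_pos _ _ _ T i ltac:(lia)).
      assert (p i < 1) by nra.
      pose proof (Rinv_gt_1 (p i) ltac:(lra) ltac:(lra)).
      split; lra. }
    rewrite (pdt_d0 _ _ _ T) in Hinv. lra.
Qed.

Lemma pdt_p_decr i j : (i <= j <= n)%nat -> p j <= p i.
Proof.
  intros Hij.
  apply (nat_invariant_up (fun m => p m <= p i) i j); [lia | lra |].
  intros m Hm Hpm.
  pose proof (pdt_p_succ _ _ _ T m ltac:(lia)).
  pose proof (pdt_d_pos (S m) ltac:(lia)).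
  pose proof (pdt_pos _ _ _ T m ltac:(lia)).
  nra.
Qed.

Lemma pdt_barrier k :
  (k <= n)%nat -> 1 <= p k -> 26 * (p k - 1) < d k * (5 + 5 * p k).
Proof.
  intros Hk Hp. apply Rnot_le_lt. intros Hd.
  assert (Hinv : 1 <= p n /\ d n * (5 + 5 * p n) <= 26 * (p n - 1)).
  { apply (nat_invariant_up
      (fun i => 1 <= p i /\ d i * (5 + 5 * p i) <= 26 * (p i - 1)) k); auto.
    intros i Hi [Hpi Hdi].
    exact (barrier_step _ _ _ _ Hpi Hdi
             (pdt_d_succ _ _ _ T i ltac:(lia)) (pdt_p_succ _ _ _ T i ltac:(lia))). }
  rewrite (pdt_pn _ _ _ T) in Hinv. lra.
Qed.

End Trajectory.

Lemma pdt_compare n p d P D :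
  pd_trajectory n p d -> pd_trajectory n P D -> p 0%nat < P 0%nat ->
  forall j, (j <= n)%nat -> p j < P j /\ D j <= d j.
Proof.
  intros T1 T2 H0.
  induction j as [|j IH]; intros Hj.
  - rewrite (pdt_d0 _ _ _ T1), (pdt_d0 _ _ _ T2). split; lra.
  - destruct (IH ltac:(lia)) as [Hp HD].
    pose proof (pdt_pos _ _ _ T1 j ltac:(lia)).
    assert (/ P j <= / p j) by (apply Rinv_le_contravar; lra).
    split.
    + rewrite (pdt_p_succ_expand _ _ _ T1 j ltac:(lia)),
              (pdt_p_succ_expand _ _ _ T2 j ltac:(lia)).
      apply step_p_lt; auto. apply (pdt_d_le_1 _ _ _ T1). lia.
    + rewrite (pdt_d_succ _ _ _ T1 j ltac:(lia)), (pdt_d_succ _ _ _ T2 j ltac:(lia)).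
      lra.
Qed.

Lemma pdt_unique n p d P D :
  pd_trajectory n p d -> pd_trajectory n P D ->
  forall j, (j <= n)%nat -> p j = P j /\ d j = D j.
Proof.
  intros T1 T2.
  assert (H0 : p 0%nat = P 0%nat).
  { pose proof (pdt_pn _ _ _ T1). pose proof (pdt_pn _ _ _ T2).
    destruct (Rtotal_order (p 0%nat) (P 0%nat)) as [Hlt|[Heq|Hgt]]; auto; exfalso.
    - destruct (pdt_compare _ _ _ _ _ T1 T2 Hlt n (le_n n)). lra.
    - destruct (pdt_compare _ _ _ _ _ T2 T1 Hgt n (le_n n)). lra. }
  induction j as [|j IH]; intros Hj.
  - rewrite (pdt_d0 _ _ _ T1), (pdt_d0 _ _ _ T2). auto.
  - destruct (IH ltac:(lia)) as [Hp HD].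
    rewrite (pdt_p_succ_expand _ _ _ T1 j ltac:(lia)),
            (pdt_p_succ_expand _ _ _ T2 j ltac:(lia)),
            (pdt_d_succ _ _ _ T1 j ltac:(lia)), (pdt_d_succ _ _ _ T2 j ltac:(lia)), Hp, HD.
    auto.
Qed.

Definition rev_p (n : nat) (p : nat -> R) (j : nat) : R :=
  if (j <? n)%nat then / p (n - 1 - j)%nat else 0.

Definition rev_d (n : nat) (d : nat -> R) (j : nat) : R := d (n - j)%nat.

Lemma pdt_rev n p d :
  (1 <= n)%nat -> pd_trajectory n p d -> pd_trajectory n (rev_p n p) (rev_d n d).
Proof.
  intros Hn T. unfold rev_p, rev_d. split.
  - rewrite Nat.sub_0_r. apply (pdt_d_n _ _ _ T Hn).
  - now rewrite Nat.ltb_irrefl.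
  - intros j Hj. rewrite (proj2 (Nat.ltb_lt j n) Hj).
    apply Rinv_0_lt_compat, (pdt_pos _ _ _ T). lia.
  - intros j Hj. rewrite (proj2 (Nat.ltb_lt j n) Hj).
    replace (n - j)%nat with (S (n - 1 - j)) by lia.
    replace (n - S j)%nat with (n - 1 - j)%nat by lia.
    rewrite (pdt_d_succ _ _ _ T (n - 1 - j) ltac:(lia)), Rinv_inv. ring.
  - intros j Hj. rewrite (proj2 (Nat.ltb_lt j n) Hj).
    destruct (S j <? n)%nat eqn:E.
    + apply Nat.ltb_lt in E.
      replace (n - 1 - j)%nat with (S (n - 1 - S j)) by lia.
      replace (n - S j)%nat with (S (n - 1 - S j)) by lia.
      set (i := (n - 1 - S j)%nat).
      pose proof (pdt_p_succ _ _ _ T i ltac:(lia)) as Hstep.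
      pose proof (pdt_pos _ _ _ T (S i) ltac:(lia)).
      pose proof (pdt_pos _ _ _ T i ltac:(lia)).
      assert (1 - d (S i) <> 0) by (intro Hc; rewrite Hc in Hstep; lra).
      rewrite Hstep. field. split; lra.
    + apply Nat.ltb_ge in E.
      replace (n - S j)%nat with 0%nat by lia.
      rewrite (pdt_d0 _ _ _ T). ring.
Qed.

Section Symmetric_trajectory.

Variables (n : nat) (p d : nat -> R).
Hypothesis Hn : (1 <= n)%nat.
Hypothesis T : pd_trajectory n p d.

Lemma pdt_p_sym j : (j < n)%nat -> p j * p (n - 1 - j)%nat = 1.
Proof.
  intros Hj.
  destruct (pdt_unique _ _ _ _ _ T (pdt_rev _ _ _ Hn T) j ltac:(lia)) as [Hp _].
  unfold rev_p in Hp. rewrite (proj2 (Nat.ltb_lt j n) Hj) in Hp.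
  rewrite Hp. field. pose proof (pdt_pos _ _ _ T (n - 1 - j) ltac:(lia)). lra.
Qed.

Lemma pdt_d_sym j : (j <= n)%nat -> d j = d (n - j)%nat.
Proof.
  intros Hj. exact (proj2 (pdt_unique _ _ _ _ _ T (pdt_rev _ _ _ Hn T) j Hj)).
Qed.

Lemma pdt_p_ge_1 k : (2 * k + 1 <= n)%nat -> 1 <= p k.
Proof.
  intros Hk.
  pose proof (pdt_p_decr _ _ _ T k (n - 1 - k) ltac:(lia)).
  pose proof (pdt_p_sym k ltac:(lia)).
  pose proof (pdt_pos _ _ _ T k ltac:(lia)).
  nra.
Qed.

Lemma pdt_p0_lt : p 0%nat < 31 / 21.
Proof.
  pose proof (pdt_barrier _ _ _ T 0 ltac:(lia) (pdt_p_ge_1 0 ltac:(lia))) as Hb.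
  rewrite (pdt_d0 _ _ _ T) in Hb. lra.
Qed.

Lemma pdt_q_bound k : (2 * k + 1 <= n)%nat -> 1 - / p k <= / 3 * (/ 2) ^ k.
Proof.
  induction k as [|k IH]; intros Hk.
  - pose proof (pdt_p_ge_1 0 Hk). pose proof pdt_p0_lt.
    assert (p 0%nat * / p 0%nat = 1) by (field; lra).
    simpl. nra.
  - pose proof (IH ltac:(lia)).
    pose proof (pdt_p_ge_1 k ltac:(lia)) as Hpk.
    pose proof (pdt_p_decr _ _ _ T 0 k ltac:(lia)). pose proof pdt_p0_lt.
    pose proof (contraction (p k) (d k) (p (S k)) Hpk ltac:(lra)
                  (pdt_barrier _ _ _ T k ltac:(lia) Hpk)
                  (pdt_p_succ_expand _ _ _ T k ltac:(lia))
                  (pdt_pos _ _ _ T (S k) ltac:(lia))).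
    simpl. lra.
Qed.

Lemma pdt_p_bound j : (j <= n)%nat -> Rabs (p j - 1) <= (/ 2) ^ (dist_end n j).
Proof.
  intros Hj. unfold dist_end.
  destruct (Nat.le_gt_cases (2 * j + 1) n) as [Hhalf|Hhalf].
  - rewrite Nat.min_l by lia.
    pose proof (pdt_p_ge_1 j Hhalf). pose proof (pdt_q_bound j Hhalf).
    pose proof (pdt_p_decr _ _ _ T 0 j ltac:(lia)). pose proof pdt_p0_lt.
    assert (p j * / p j = 1) by (field; lra).
    pose proof (pow_lt (/ 2) j ltac:(lra)).
    rewrite Rabs_right by lra. nra.
  - rewrite Nat.min_r by lia.
    destruct (Nat.eq_dec j n) as [->|Hjn].
    + rewrite (pdt_pn _ _ _ T), Nat.sub_diag, Rabs_left1 by lra. simpl. lra.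
    + set (k := (n - 1 - j)%nat).
      pose proof (pdt_p_sym j ltac:(lia)) as Hsym. fold k in Hsym.
      pose proof (pdt_p_ge_1 k ltac:(unfold k; lia)) as Hpk.
      pose proof (pdt_q_bound k ltac:(unfold k; lia)).
      pose proof (pow_lt (/ 2) k ltac:(lra)).
      assert (p j = / p k) by (field_simplify_eq; lra).
      replace (n - j)%nat with (S k) by (unfold k; lia).
      rewrite Rabs_left1 by (pose proof (Rinv_le_1 _ Hpk); lra).
      simpl. lra.
Qed.

Lemma pdt_d_bound_half j : (2 * j <= n)%nat -> d j <= golden * (/ 2) ^ j.
Proof.
  intros Hj. pose proof golden_ge_4_3.
  destruct j as [|k].
  - rewrite (pdt_d0 _ _ _ T). simpl. lra.
  - pose proof (pdt_p_sym k ltac:(lia)) as Hsym.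
    pose proof (pdt_p_ge_1 k ltac:(lia)) as Hpk.
    pose proof (pdt_q_bound k ltac:(lia)).
    pose proof (pow_lt (/ 2) k ltac:(lra)).
    assert (Hmirror : / p k <= p (S k)).
    { pose proof (pdt_p_decr _ _ _ T (S k) (n - 1 - k) ltac:(lia)).
      assert (p (n - 1 - k)%nat = / p k) by (field_simplify_eq; lra).
      lra. }
    assert (Hratio : 1 - d (S k) = / p k * p (S k)).
    { rewrite (pdt_p_succ _ _ _ T k ltac:(lia)). field. lra. }
    assert (Hd : d (S k) <= 2 * (1 - / p k)).
    { pose proof (Rinv_le_1 _ Hpk).
      assert (0 < / p k) by (apply Rinv_0_lt_compat; lra).
      nra. }
    simpl. nra.
Qed.

Lemma pdt_d_dist_end j : (j <= n)%nat -> d j = d (dist_end n j).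
Proof.
  intros Hj. unfold dist_end.
  destruct (Nat.le_ge_cases j (n - j)).
  - now rewrite Nat.min_l.
  - rewrite Nat.min_r by lia. now apply pdt_d_sym.
Qed.

End Symmetric_trajectory.

Lemma trajectory_pd n p u :
  (1 <= n)%nat -> is_trajectory n p u -> pd_trajectory n p (fun j => 1 - p j * u j).
Proof.
  intros Hn [Hphi [Hu0 [Hpn Hpos]]].
  assert (Hpos' : forall j, (j < n)%nat -> 0 < p j) by (intros; apply Hpos; lia).
  assert (Hstep : forall j, (j < n)%nat ->
            p (S j) = p j ^ 2 * (u j + 1) - 1 /\ u (S j) = / p j).
  { intros j Hj. pose proof (Hphi (S j) ltac:(lia)) as E.
    replace (S j - 1)%nat with j in E by lia.
    unfold Phi in E. now injection E. }
  split; auto.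
  - rewrite Hu0. ring.
  - intros j Hj. destruct (Hstep j Hj) as [-> ->]. pose proof (Hpos' j Hj). field. lra.
  - intros j Hj. destruct (Hstep j Hj) as [-> ->]. pose proof (Hpos' j Hj). field. lra.
Qed.

Theorem lemma7 (n : nat) (p u : nat -> R) :
  (1 <= n)%nat ->
  is_trajectory n p u ->
  forall j : nat, (j <= n)%nat ->
    Rabs (p j - 1) <= (/ 2) ^ (dist_end n j)
    /\ 0 < 1 - p j * u j
    /\ 1 - p j * u j <= golden * (/ 2) ^ (dist_end n j).
Proof.
  intros Hn Htraj j Hj.
  pose proof (trajectory_pd n p u Hn Htraj) as T.
  set (d := fun j => 1 - p j * u j) in T.
  change (1 - p j * u j) with (d j).
  rewrite (pdt_d_dist_end n p d Hn T j Hj).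
  assert (Hm : (2 * dist_end n j <= n)%nat) by (unfold dist_end; lia).
  split; [|split].
  - exact (pdt_p_bound n p d Hn T j Hj).
  - apply (pdt_d_pos n p d T). lia.
  - exact (pdt_d_bound_half n p d Hn T _ Hm).
Qed.
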